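(* Let $k$ be a field and let $A$ be a $k$-algebra with two graded algebra decompositions $A=\bigoplus_{i=0}^{\infty}A_i=\bigoplus_{i=0}^{\infty}B_i$ such that (1) $A_0=B_0=k$; (2) $A$ is generated as an algebra by $A_1$, and also by $B_1$; (3) either $A_1$ or $B_1$ is finite dimensional over $k$. Suppose that every algebra automorphism of $A$ is graded with respect to the grading $(A_i)_{i\ge0}$, i.e. $\mathrm{Aut}(A)=\mathrm{Aut}_{gr}(A)$. Then $A_i=B_i$ for all $i$.
   Context: $\mathrm{Aut}(A)$ denotes the group of $k$-algebra automorphisms of $A$, and $\mathrm{Aut}_{gr}(A)$ the subgroup of those $\phi$ with $\phi(A_i)=A_i$ for all $i$. *)

From HB Require Import structures.
From mathcomp Require Import all_boot all_order all_algebra.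
Set Implicit Arguments. Unset Strict Implicit. Unset Printing Implicit Defensive.
Import GRing.Theory.
Local Open Scope ring_scope.

Definition is_subspace (k : fieldType) (A : algType k) (S : A -> Prop) : Prop :=
  S 0 /\ (forall (c : k) (u v : A), S u -> S v -> S (c *: u + v)).

Definition graded_decomposition (k : fieldType) (A : algType k)
    (G : nat -> A -> Prop) : Prop :=
  [/\ forall i, is_subspace (G i),
      G 0%N 1,
      (forall i j (x y : A), G i x -> G j y -> G (i + j)%N (x * y)),
      (forall a : A, exists (n : nat) (f : nat -> A),
          (forall i, G i (f i)) /\ a = \sum_(i < n) f i) &
      (forall (n : nat) (f : nat -> A),
          (forall i, G i (f i)) -> \sum_(i < n) f i = 0 ->
          forall i, (i < n)%N -> f i = 0)].

Definition is_base_field (k : fieldType) (A : algType k) (S : A -> Prop) : Prop :=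
  forall a : A, S a <-> exists c : k, a = c%:A.

Definition generates (k : fieldType) (A : algType k) (S : A -> Prop) : Prop :=
  forall P : A -> Prop,
    P 1 -> (forall (c : k) (u v : A), P u -> P v -> P (c *: u + v)) ->
    (forall u v : A, P u -> P v -> P (u * v)) ->
    (forall x, S x -> P x) ->
    forall a : A, P a.

Definition finite_dim (k : fieldType) (A : algType k) (S : A -> Prop) : Prop :=
  exists (n : nat) (v : 'I_n -> A),
    forall a : A, S a <-> exists c : 'I_n -> k, a = \sum_(i < n) c i *: v i.

Definition is_alg_aut (k : fieldType) (A : algType k) (phi : A -> A) : Prop :=
  [/\ forall u v : A, phi (u + v) = phi u + phi v,
      forall (c : k) (u : A), phi (c *: u) = c *: phi u,
      forall u v : A, phi (u * v) = phi u * phi v,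
      phi 1 = 1 &
      bijective phi].

Definition is_graded_map (k : fieldType) (A : algType k)
    (G : nat -> A -> Prop) (phi : A -> A) : Prop :=
  forall i, (forall x, G i x -> G i (phi x)) /\
            (forall y, G i y -> exists x, G i x /\ phi x = y).

From HB Require Import structures.
From mathcomp Require Import all_boot all_order all_algebra.
From Stdlib Require Import IndefiniteDescription Classical.
From mathcomp Require Import zify.
Set Implicit Arguments. Unset Strict Implicit. Unset Printing Implicit Defensive.
Import GRing.Theory.
Local Open Scope ring_scope.

(* Write A_{<n} for the span of A_0, ..., A_{n-1} and B_{>=n} for the span of
   B_n, B_{n+1}, ....  As B_0 = k sits in A_0, every x in A_1 is a scalar plus
   an element of A_{<2} /\ B_{>=1}; products of such elements "straddling" a
   degree again straddle one, so, A_1 generating A, A = A_{<n} + B_{>=n}.  If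
   A_1 is finite dimensional, so is A_{<n}, and truncating below degree n first
   for B and then for A maps A_{<n} linearly onto itself, hence injectively; it
   kills A_{<n} /\ B_{>=n}, so the sum is direct.  Projecting A_n onto B_{>=n}
   along A_{<n} and keeping the B_n-component then gives linear bijections
   A_n -> B_n compatible with products, whose direct sum is an automorphism of A
   mapping each A_n onto B_n.  It is graded by hypothesis, whence A_n = B_n.
   Finite dimensionality passes from B_1 to A_1, since the A_1-component maps
   B_1 onto A_1. *)

Lemma big_ord_widen_zero (V : nmodType) (F : nat -> V) m M :
  (forall i, (m <= i)%N -> F i = 0) -> (m <= M)%N ->
  \sum_(i < M) F i = \sum_(i < m) F i.
Proof.
move=> HF hmM; rewrite (big_ord_widen _ _ hmM) [RHS]big_mkcond /=.
by apply: eq_bigr => i _; case: ltnP => // /HF ->.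
Qed.

Lemma big_ord_widen_if (V : nmodType) (F : nat -> V) n m : (n <= m)%N ->
  \sum_(i < m) (if (i < n)%N then F i else 0) = \sum_(i < n) F i.
Proof. by move=> h; rewrite [RHS](big_ord_widen _ _ h) [RHS]big_mkcond. Qed.

Section Subspace.
Variables (k : fieldType) (A : algType k) (S : A -> Prop).
Hypothesis subS : is_subspace S.

Lemma subspace0 : S 0. Proof. by case: subS. Qed.

Lemma subspace_lin c u v : S u -> S v -> S (c *: u + v).
Proof. by case: subS => _; apply. Qed.

Lemma subspaceD u v : S u -> S v -> S (u + v).
Proof. by move=> hu hv; have := subspace_lin 1 hu hv; rewrite scale1r. Qed.

Lemma subspaceZ c u : S u -> S (c *: u).
Proof. by move=> hu; have := subspace_lin c hu subspace0; rewrite addr0. Qed.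

Lemma subspaceB u v : S u -> S v -> S (u - v).
Proof. by move=> hu hv; rewrite -scaleN1r; apply: subspaceD (subspaceZ _ hv). Qed.

Lemma subspace_sum (I : Type) (r : seq I) (P : pred I) F :
  (forall j, P j -> S (F j)) -> S (\sum_(j <- r | P j) F j).
Proof. by move=> H; apply: big_ind => //; [apply: subspace0 | apply: subspaceD]. Qed.

End Subspace.

Section Graded.
Variables (k : fieldType) (A : algType k) (G : nat -> A -> Prop).
Hypothesis HG : graded_decomposition G.

Lemma graded_subspace i : is_subspace (G i). Proof. by case: HG. Qed.
Lemma graded1 : G 0 1. Proof. by case: HG. Qed.
Lemma graded_mul i j x y : G i x -> G j y -> G (i + j)%N (x * y).
Proof. by case: HG => _ _ H _ _; apply: H. Qed.

Lemma graded_homog_sum a :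
  exists n (f : nat -> A), (forall i, G i (f i)) /\ a = \sum_(i < n) f i.
Proof. by case: HG => _ _ _ H _; apply: H. Qed.

Definition homog_sum (a : A) :
  {n : nat & {f : nat -> A | (forall i, G i (f i)) /\ a = \sum_(i < n) f i}}.
Proof.
have [n Hn] := constructive_indefinite_description _ (graded_homog_sum a).
by exists n; apply: constructive_indefinite_description.
Defined.

Definition hcomp (i : nat) (a : A) : A :=
  let: existT n s := homog_sum a in if (i < n)%N then proj1_sig s i else 0.

Lemma hcomp_unique n f a : (forall i, G i (f i)) -> a = \sum_(i < n) f i ->
  forall i, hcomp i a = if (i < n)%N then f i else 0.
Proof.
move=> Hf Ha; rewrite /hcomp; case: (homog_sum a) => m [g [Hg Ha']] /= i.
set M := maxn n m.
pose h i := (if (i < n)%N then f i else 0) - (if (i < m)%N then g i else 0).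
have Hh j : G j (h j).
  by rewrite /h; apply: (subspaceB (graded_subspace j)); case: ifP => _;
    rewrite ?Hf ?Hg //; apply: subspace0 (graded_subspace j).
have Hs : \sum_(j < M) h j = 0.
  by rewrite sumrB !big_ord_widen_if ?leq_maxl ?leq_maxr // -Ha -Ha' subrr.
case: HG => _ _ _ _ /(_ M h Hh Hs i) Hu.
case: (ltnP i M) => [/Hu /eqP|iM]; first by rewrite subr_eq0 => /eqP.
by rewrite !ifN // -leqNgt (leq_trans _ iM) ?leq_maxl ?leq_maxr.
Qed.

Lemma hcomp_graded i a : G i (hcomp i a).
Proof.
rewrite /hcomp; case: (homog_sum a) => n [f [Hf _]] /=.
by case: ifP => _; [apply: Hf | apply: subspace0 (graded_subspace i)].
Qed.

Lemma hcomp_homog j x i : G j x -> hcomp i x = if i == j then x else 0.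
Proof.
move=> Hx; pose f l := if l == j then x else 0.
have Hf l : G l (f l).
  by rewrite /f; case: eqP => [->|_] //; apply: subspace0 (graded_subspace l).
have Hs : x = \sum_(l < j.+1) f l.
  rewrite big_ord_recr /= /f eqxx big1 ?add0r // => l _.
  by rewrite ifN // neq_ltn ltn_ord.
rewrite (hcomp_unique Hf Hs) /f; case: ltnP => // hi.
by rewrite ifN // gtn_eqF.
Qed.

Lemma hcomp_id j x : G j x -> hcomp j x = x.
Proof. by move=> hx; rewrite (hcomp_homog j hx) eqxx. Qed.

Definition deg_lt n a := forall i, (n <= i)%N -> hcomp i a = 0.
Definition deg_ge n a := forall i, (i < n)%N -> hcomp i a = 0.

Lemma deg_lt_exists a : exists n, deg_lt n a.
Proof.
rewrite /deg_lt /hcomp; case: (homog_sum a) => n [f [Hf _]] /=.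
by exists n => i hi; rewrite ltnNge hi.
Qed.

Lemma deg_lt_decomp n a : deg_lt n a -> a = \sum_(i < n) hcomp i a.
Proof.
move=> Hm; have [m [f [Hf Ha]]] := graded_homog_sum a.
rewrite -(@big_ord_widen_zero _ (hcomp^~ a) n (maxn m n)) ?leq_maxr //.
rewrite (eq_bigr (fun i : 'I_(maxn m n) => if (i < m)%N then f i else 0)).
  by rewrite big_ord_widen_if ?leq_maxl.
by move=> i _; rewrite (hcomp_unique Hf Ha).
Qed.

Lemma hcomp_lin i c u v : hcomp i (c *: u + v) = c *: hcomp i u + hcomp i v.
Proof.
have [n1 H1] := deg_lt_exists u; have [n2 H2] := deg_lt_exists v.
set n := maxn n1 n2; have [l1 l2] : (n1 <= n /\ n2 <= n)%N by rewrite leq_maxl leq_maxr.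
have Hf l : G l (c *: hcomp l u + hcomp l v).
  by apply: (subspace_lin (graded_subspace l)); apply: hcomp_graded.
have Hs : c *: u + v = \sum_(l < n) (c *: hcomp l u + hcomp l v).
  rewrite big_split /= -scaler_sumr -!deg_lt_decomp // => l hl.
    by apply: H2 (leq_trans l2 hl).
  by apply: H1 (leq_trans l1 hl).
rewrite (hcomp_unique Hf Hs); case: ltnP => // hi.
by rewrite H1 ?H2 ?scaler0 ?addr0 // (leq_trans _ hi).
Qed.

Lemma hcomp0 i : hcomp i 0 = 0.
Proof. by rewrite (hcomp_homog _ (subspace0 (graded_subspace 0))); case: ifP. Qed.
Lemma hcompD i u v : hcomp i (u + v) = hcomp i u + hcomp i v.
Proof. by rewrite -{1}[u]scale1r hcomp_lin scale1r. Qed.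
Lemma hcompZ i c u : hcomp i (c *: u) = c *: hcomp i u.
Proof. by rewrite -[c *: u]addr0 hcomp_lin hcomp0 addr0. Qed.
Lemma hcompB i u v : hcomp i (u - v) = hcomp i u - hcomp i v.
Proof. by rewrite hcompD -!scaleN1r hcompZ. Qed.
Lemma hcomp_sum i (I : Type) (r : seq I) (P : pred I) F :
  hcomp i (\sum_(j <- r | P j) F j) = \sum_(j <- r | P j) hcomp i (F j).
Proof. exact: (big_morph _ (hcompD i) (hcomp0 i)). Qed.

Lemma deg_lt_subspace n : is_subspace (deg_lt n).
Proof.
split=> [i _|c u v hu hv i hi]; first exact: hcomp0.
by rewrite hcomp_lin hu ?hv ?scaler0 ?addr0.
Qed.

Lemma deg_ge_subspace n : is_subspace (deg_ge n).
Proof.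
split=> [i _|c u v hu hv i hi]; first exact: hcomp0.
by rewrite hcomp_lin hu ?hv ?scaler0 ?addr0.
Qed.

Lemma deg_lt_mono n m a : (n <= m)%N -> deg_lt n a -> deg_lt m a.
Proof. by move=> h H i hi; apply: H; apply: leq_trans hi. Qed.
Lemma deg_ge_mono n m a : (m <= n)%N -> deg_ge n a -> deg_ge m a.
Proof. by move=> h H i hi; apply: H; apply: leq_trans h. Qed.

Lemma graded_deg_lt j x : G j x -> deg_lt j.+1 x.
Proof. by move=> hx i hi; rewrite (hcomp_homog i hx) ifN // gtn_eqF. Qed.
Lemma graded_deg_ge j x : G j x -> deg_ge j x.
Proof. by move=> hx i hi; rewrite (hcomp_homog i hx) ifN // ltn_eqF. Qed.

Lemma hcomp_mul M a b l : deg_lt M a -> deg_lt M b ->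
  hcomp l (a * b) = \sum_(i < M) \sum_(j < M)
     (if l == (i + j)%N then hcomp i a * hcomp j b else 0).
Proof.
move=> ha hb; rewrite {1}(deg_lt_decomp ha) {1}(deg_lt_decomp hb) mulr_suml hcomp_sum.
apply: eq_bigr => i _; rewrite mulr_sumr hcomp_sum; apply: eq_bigr => j _.
by rewrite (hcomp_homog l (graded_mul (hcomp_graded i a) (hcomp_graded j b))).
Qed.

Lemma deg_lt_mul n m a b : deg_lt n a -> deg_lt m b -> deg_lt (n + m).-1 (a * b).
Proof.
move=> ha hb l hl.
rewrite (hcomp_mul l (deg_lt_mono (leq_addr m n) ha) (deg_lt_mono (leq_addl n m) hb)).
apply: big1 => i _; apply: big1 => j _; case: eqP => // ->{l} in hl *.
case: (ltnP i n) => hi; last by rewrite ha ?mul0r.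
case: (ltnP j m) => hj; last by rewrite hb ?mulr0.
by exfalso; move: hl hi hj; move: (nat_of_ord i) (nat_of_ord j) => i' j'; lia.
Qed.

Lemma deg_ge_mul n m a b : deg_ge n a -> deg_ge m b -> deg_ge (n + m) (a * b).
Proof.
move=> ha hb l hl; have [M hM] := deg_lt_exists a; have [M' hM'] := deg_lt_exists b.
rewrite (hcomp_mul l (deg_lt_mono (leq_maxl M M') hM) (deg_lt_mono (leq_maxr M M') hM')).
apply: big1 => i _; apply: big1 => j _; case: eqP => // ->{l} in hl *.
case: (ltnP i n) => hi; first by rewrite ha ?mul0r.
case: (ltnP j m) => hj; first by rewrite hb ?mulr0.
by move: hl; rewrite ltnNge leq_add.
Qed.

Lemma deg_ge_sub_hcomp n a : deg_ge n a -> deg_ge n.+1 (a - hcomp n a).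
Proof.
move=> ha i; rewrite ltnS leq_eqVlt => /orP [/eqP ->|hi].
  by rewrite hcompB (hcomp_id (hcomp_graded n a)) subrr.
by rewrite hcompB ha // (hcomp_homog i (hcomp_graded n a)) ifN ?subrr // ltn_eqF.
Qed.

Lemma deg_lt_hcomp_sub n a : deg_lt n.+1 a -> deg_lt n (hcomp n a - a).
Proof.
move=> ha i; rewrite leq_eqVlt => /orP [/eqP <-|hi].
  by rewrite hcompB (hcomp_id (hcomp_graded n a)) subrr.
by rewrite hcompB (ha i) // (hcomp_homog i (hcomp_graded n a)) ifN ?subrr // gtn_eqF.
Qed.

(* The three cross terms land in degree > n + m. *)
Lemma hcomp_mul_deg_ge n m a b : deg_ge n a -> deg_ge m b ->
  hcomp (n + m) (a * b) = hcomp n a * hcomp m b.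
Proof.
move=> /deg_ge_sub_hcomp ra /deg_ge_sub_hcomp rb.
move: ra rb; set a' := a - _; set b' := b - _ => ra rb.
have -> : a * b = (hcomp n a + a') * (hcomp m b + b').
  by rewrite /a' /b' addrC subrK addrC subrK.
clearbody a' b'.
rewrite mulrDl !mulrDr !hcompD hcomp_id; last exact/graded_mul/hcomp_graded/hcomp_graded.
rewrite (deg_ge_mul (graded_deg_ge (hcomp_graded n a)) rb) ?addnS //.
rewrite (deg_ge_mul ra (graded_deg_ge (hcomp_graded m b))) ?addSn //.
by rewrite (deg_ge_mul ra rb) ?addSn ?addnS ?ltnS 1?ltnW // !addr0.
Qed.

End Graded.

Definition lin_span (k : fieldType) (A : algType k) (Q : A -> Prop) (a : A) :=
  exists s : seq (k * A), (forall p, p \in s -> Q p.2) /\ a = \sum_(p <- s) p.1 *: p.2.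

Lemma generates_lin_span (k : fieldType) (A : algType k) (S Q : A -> Prop) :
  generates S -> Q 1 -> (forall x y, Q x -> Q y -> Q (x * y)) ->
  (forall x, S x -> lin_span Q x) -> forall a, lin_span Q a.
Proof.
move=> gen Q1 Qmul HS; apply: gen => //.
- exists [:: (1, 1)]; split; first by move=> p; rewrite inE => /eqP ->.
  by rewrite big_cons big_nil scale1r addr0.
- move=> c u v [su [Hsu ->]] [sv [Hsv ->]].
  exists ([seq (c * p.1, p.2) | p <- su] ++ sv); split.
    by move=> p; rewrite mem_cat => /orP [/mapP [q /Hsu ? ->]|/Hsv].
  rewrite big_cat big_map /= scaler_sumr; congr (_ + _).
  by apply: eq_bigr => p _; rewrite scalerA.
- move=> u v [su [Hsu ->]] [sv [Hsv ->]].
  exists [seq (p.1 * q.1, p.2 * q.2) | p <- su, q <- sv]; split.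
    by move=> r /allpairsP [[p q] [/Hsu ? /Hsv ? ->]]; apply: Qmul.
  rewrite big_allpairs_dep /= mulr_suml; apply: eq_bigr => p _.
  rewrite -scalerAl mulr_sumr scaler_sumr; apply: eq_bigr => q _.
  by rewrite -scalerAr scalerA.
Qed.

Lemma base_field_sub (k : fieldType) (A : algType k) (S T : A -> Prop) :
  is_base_field S -> is_base_field T -> forall x, S x -> T x.
Proof. by move=> hS hT x /hS /hT. Qed.

Section TwoGradings.
Variables (k : fieldType) (A : algType k) (G H : nat -> A -> Prop).
Hypotheses (HG : graded_decomposition G) (HH : graded_decomposition H).
Hypotheses (H0G0 : forall x, H 0 x -> G 0 x) (genG : generates (G 1)).

Definition straddles j z := deg_lt HG j.+1 z /\ deg_ge HH j z.

(* A generator [x] of degree 1 for [G] is [hcomp HH 0 x], of degree 0 for both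
   gradings, plus [x - hcomp HH 0 x], which straddles degree 1. *)
Lemma lin_span_straddles a : lin_span (fun z => exists j, straddles j z) a.
Proof.
apply: (generates_lin_span genG).
- by exists 0%N; split; [apply: graded_deg_lt; apply: graded1|].
- move=> x y [j [h1 h2]] [j' [h1' h2']]; exists (j + j')%N; split.
    by have := deg_lt_mul h1 h1'; rewrite addSn addnS.
  exact: deg_ge_mul h2 h2'.
- move=> x hx; set c := hcomp HH 0 x.
  have gc : G 0 c by apply: H0G0; apply: hcomp_graded.
  exists [:: (1, c); (1, x - c)]; split.
    move=> p; rewrite !inE => /orP [] /eqP -> /=.
      by exists 0%N; split; [apply: graded_deg_lt|].
    exists 1%N; split; last by apply: deg_ge_sub_hcomp.
    apply: (subspaceB (deg_lt_subspace HG 2)); first exact: graded_deg_lt.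
    exact: deg_lt_mono _ (graded_deg_lt HG gc).
  by rewrite !big_cons big_nil /= !scale1r addr0 addrC subrK.
Qed.

Lemma deg_lt_deg_ge_cover n a :
  exists a1 a2, deg_lt HG n a1 /\ deg_ge HH n a2 /\ a = a1 + a2.
Proof.
have [s [Hs {a}->]] := lin_span_straddles a; elim: s Hs => [|[c z] s IH] Hs.
  exists 0, 0; rewrite big_nil addr0; split; first exact: subspace0 (deg_lt_subspace HG n).
  by split; first exact: subspace0 (deg_ge_subspace HH n).
rewrite big_cons /=; have [|a1 [a2 [h1 [h2 ->]]]] := IH.
  by move=> p hp; apply: Hs; rewrite inE hp orbT.
have [j [hz1 hz2]] : exists j, straddles j z by apply: (Hs (c, z)); rewrite inE eqxx.
case: (ltnP j n) => hj.
  exists (c *: z + a1), a2; split; last by split => //; rewrite addrA.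
  by apply: (subspace_lin (deg_lt_subspace HG n)) => //; apply: deg_lt_mono hz1.
exists a1, (c *: z + a2); split => //; split; last by rewrite addrCA.
by apply: (subspace_lin (deg_ge_subspace HH n)) => //; apply: deg_ge_mono hz2.
Qed.

End TwoGradings.

Section FiniteSpan.
Variables (k : fieldType) (A : algType k).

Definition spans N (w : 'I_N -> A) (V : A -> Prop) :=
  forall a, V a <-> exists e : 'I_N -> k, a = \sum_(i < N) e i *: w i.

Lemma ex_minimal (P : nat -> Prop) N : P N ->
  exists M, P M /\ forall M', (M' < M)%N -> ~ P M'.
Proof.
elim/ltn_ind: N => N IH PN.
have [[M' [lt PM']]|no] := classic (exists M', (M' < N)%N /\ P M'); first exact: IH lt PM'.
by exists N; split => // M' lt PM'; apply: no; exists M'.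
Qed.

(* A nontrivial relation lets one drop a vector from the spanning family. *)
Lemma minimal_spanning_free M (u : 'I_M -> A) V : spans u V ->
  (forall M', (M' < M)%N -> forall u' : 'I_M' -> A, ~ spans u' V) ->
  forall e : 'I_M -> k, \sum_(i < M) e i *: u i = 0 -> forall i, e i = 0.
Proof.
move=> sp mini e he j; apply: NNPP => /eqP nz.
have lt : (M.-1 < M)%N by rewrite ltn_predL (leq_ltn_trans _ (ltn_ord j)).
apply: (mini M.-1 lt (fun i => u (lift j i))) => a; split; last first.
  move=> [g' ->]; apply/sp; exists (fun i => oapp g' 0 (unlift j i)).
  rewrite (bigD1_ord j) //= unlift_none scale0r add0r.
  by apply: eq_bigr => i _; rewrite liftK.
move=> /sp [f ->]; pose g i := f i - f j / e j * e i.
have -> : \sum_(i < M) f i *: u i = \sum_(i < M) g i *: u i.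
  rewrite [RHS](eq_bigr (fun i => f i *: u i - (f j / e j) *: (e i *: u i))).
    by rewrite sumrB -scaler_sumr he scaler0 subr0.
  by move=> i _; rewrite scalerBl scalerA.
exists (fun i => g (lift j i)).
by rewrite (bigD1_ord j) //= /g divfK // subrr scale0r add0r.
Qed.

(* Transport a minimal spanning family along [h]: it stays spanning, hence free. *)
Lemma fin_span_onto_inj N (w : 'I_N -> A) (V : A -> Prop) (h : A -> A) :
  spans w V ->
  (forall u v, h (u + v) = h u + h v) -> (forall (c : k) u, h (c *: u) = c *: h u) ->
  (forall a, V a -> V (h a)) -> (forall a, V a -> exists b, V b /\ h b = a) ->
  forall a, V a -> h a = 0 -> a = 0.
Proof.
move=> spw hD hZ hV hS.
have h0 : h 0 = 0 by apply: (addrI (h 0)); rewrite -hD !addr0.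
have hsum M (e : 'I_M -> k) (u : 'I_M -> A) :
    h (\sum_(i < M) e i *: u i) = \sum_(i < M) e i *: h (u i).
  by rewrite (big_morph h hD h0); apply: eq_bigr => i _.
have [M [[u spu] mini]] :=
  ex_minimal (P := fun M => exists u : 'I_M -> A, spans u V) (ex_intro _ w spw).
have sph : spans (fun i => h (u i)) V.
  move=> a; split; first by move=> /hS [b [/spu [e ->] <-]]; exists e.
  by move=> [e ->]; rewrite -hsum; apply/hV/spu; exists e.
move=> a /spu [e ->]; rewrite hsum => he.
have e0 := minimal_spanning_free sph (fun M' lt u' sp => mini M' lt (ex_intro _ u' sp)) he.
by apply: big1 => i _; rewrite e0 scale0r.
Qed.

Lemma lin_comb_seq_nth (L : seq A) (s : seq (k * A)) :
  (forall p, p \in s -> p.2 = 0 \/ p.2 \in L) ->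
  exists e : 'I_(size L) -> k, \sum_(p <- s) p.1 *: p.2 = \sum_(i < size L) e i *: L`_i.
Proof.
elim: s => [|[c z] s IH] Hs.
  by exists (fun _ => 0); rewrite big_nil big1 // => i _; rewrite scale0r.
rewrite big_cons /=; have [|e ->] := IH.
  by move=> p hp; apply: Hs; rewrite inE hp orbT.
have [->|zL] : z = 0 \/ z \in L by apply: (Hs (c, z)); rewrite inE eqxx.
  by exists e; rewrite scaler0 add0r.
pose j0 : 'I_(size L) := Ordinal (etrans (index_mem z L) zL).
exists (fun i => e i + (if i == j0 then c else 0)).
under [RHS]eq_bigr do rewrite scalerDl.
rewrite big_split /= addrC; congr (_ + _).
by rewrite (bigD1 j0) //= eqxx nth_index // big1 ?addr0 // => i /negbTE ->; rewrite scale0r.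
Qed.

End FiniteSpan.

Section Words.
Variables (k : fieldType) (A : algType k) (G : nat -> A -> Prop).
Hypotheses (HG : graded_decomposition G) (genG : generates (G 1)).
Variables (d : nat) (v : 'I_d -> A).
Hypothesis spv : spans v (G 1).

Definition word (ws : seq 'I_d) : A := \prod_(i <- ws) v i.

Lemma word_graded ws : G (size ws) (word ws).
Proof.
rewrite /word; elim: ws => [|i ws IH]; first by rewrite big_nil; apply: graded1.
rewrite big_cons /=; apply: (graded_mul HG (i := 1)) => //.
apply/spv; exists (fun j => (j == i)%:R).
by rewrite (bigD1 i) //= eqxx scale1r big1 ?addr0 // => j /negbTE ->; rewrite scale0r.
Qed.

Fixpoint words (n : nat) : seq (seq 'I_d) :=
  if n is n'.+1 then [::] :: [seq i :: w | i <- enum 'I_d, w <- words n'] else [::].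

Lemma mem_words n w : (w \in words n) = (size w < n)%N.
Proof.
elim: n w => [|n IH] [|i w] //=; rewrite inE //= ltnS -IH.
apply/allpairsP/idP => [[[j w'] [_ hw' [_ ->]]] //|hw].
by exists (i, w); rewrite mem_enum.
Qed.

Lemma lin_span_words a : lin_span (fun z => exists ws, z = word ws) a.
Proof.
apply: (generates_lin_span genG).
- by exists [::]; rewrite /word big_nil.
- by move=> x y [w1 ->] [w2 ->]; exists (w1 ++ w2); rewrite /word big_cat.
- move=> x /spv [c ->]; exists [seq (c i, v i) | i <- index_enum 'I_d]; split.
    by move=> p /mapP [i _ ->]; exists [:: i]; rewrite /word big_cons big_nil mulr1.
  by rewrite big_map.
Qed.

(* Truncating a combination of words below degree [n] keeps the words of length [< n]. *)
Lemma deg_lt_fin_span n : exists N (w : 'I_N -> A), spans w (deg_lt HG n).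
Proof.
set L := [seq word w | w <- words n].
exists (size L), (fun i => L`_i) => a; split; last first.
  move=> [e ->]; apply: (subspace_sum (deg_lt_subspace HG n)) => i _.
  apply: (subspaceZ (deg_lt_subspace HG n)).
  have /mapP [w hw ->] : L`_i \in L by apply: mem_nth.
  by apply: deg_lt_mono (graded_deg_lt HG (word_graded w)); rewrite -mem_words.
move=> ha; have [s [Hs Ha]] := lin_span_words a.
have [|e he] := @lin_comb_seq_nth _ _ L [seq (p.1, \sum_(m < n) hcomp HG m p.2) | p <- s].
  move=> q /mapP [p /Hs [ws ->] ->] /=; case: (ltnP (size ws) n) => hsz.
    right; rewrite -deg_lt_decomp; first by rewrite map_f ?mem_words.
    exact: deg_lt_mono hsz (graded_deg_lt HG (word_graded ws)).
  left; apply: big1 => m _.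
  by apply: (graded_deg_ge HG (word_graded ws)); apply: leq_trans hsz.
exists e; rewrite -he big_map /= (deg_lt_decomp ha) Ha.
rewrite (eq_bigr (fun i : 'I_n => \sum_(p <- s) p.1 *: hcomp HG i p.2)); last first.
  by move=> i _; rewrite hcomp_sum; apply: eq_bigr => p _; rewrite hcompZ.
by rewrite exchange_big /=; apply: eq_bigr => p _; rewrite scaler_sumr.
Qed.

End Words.

Section Directness.
Variables (k : fieldType) (A : algType k) (G H : nat -> A -> Prop).
Hypotheses (HG : graded_decomposition G) (HH : graded_decomposition H).
Hypotheses (bG : is_base_field (G 0)) (bH : is_base_field (H 0)).
Hypotheses (genG : generates (G 1)) (genH : generates (H 1)).

(* Degree 2 of the cover shows [hcomp HH 1] maps [G 1] onto [H 1]. *)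
Lemma finite_dim_deg1 : finite_dim (G 1) -> finite_dim (H 1).
Proof.
move=> [d [v spv]]; exists d, (fun i => hcomp HH 1 (v i)) => a; split; last first.
  move=> [c ->]; apply: (subspace_sum (graded_subspace HH 1)) => i _.
  by apply: (subspaceZ (graded_subspace HH 1)); apply: hcomp_graded.
move=> ha; have [g [h [hg [hh ea]]]] :=
  deg_lt_deg_ge_cover HG HH (base_field_sub bH bG) genG 2 a.
have [c hc] := (spv (hcomp HG 1 g)).1 (hcomp_graded HG 1 g).
have [e he] := (bG (hcomp HG 0 g)).1 (hcomp_graded HG 0 g).
have He : H 0 (e%:A) by apply/bH; exists e.
exists c; rewrite -(hcomp_id HH ha) ea hcompD (hh 1%N) // addr0.
rewrite {1}(deg_lt_decomp hg) !big_ord_recr big_ord0 /= add0r hcompD he hc.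
by rewrite (hcomp_homog HH 1 He) add0r hcomp_sum; apply: eq_bigr => i _; rewrite hcompZ.
Qed.

(* The composite of the truncations below degree [n] for [H] and for [G] maps
   the finite-dimensional space [deg_lt HG n] onto itself, hence injectively;
   it kills [deg_ge HH n]. *)
Lemma deg_lt_deg_ge_trivial : finite_dim (G 1) ->
  forall n a, deg_lt HG n a -> deg_ge HH n a -> a = 0.
Proof.
move=> [d [v spv]] n.
have [N [w spw]] := deg_lt_fin_span HG genG spv n.
pose trunc (K : nat -> A -> Prop) (HK : graded_decomposition K) x :=
  \sum_(j < n) hcomp HK j x.
have truncD K HK x y : trunc K HK (x + y) = trunc K HK x + trunc K HK y.
  by rewrite /trunc -big_split; apply: eq_bigr => j _; rewrite hcompD.
have truncZ K HK c x : trunc K HK (c *: x) = c *: trunc K HK x.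
  by rewrite /trunc scaler_sumr; apply: eq_bigr => j _; rewrite hcompZ.
have trunc_id K HK x y : deg_lt HK n x -> deg_ge HK n y -> trunc K HK (x - y) = x.
  move=> hx hy; rewrite /trunc (eq_bigr (fun j : 'I_n => hcomp HK j x)).
    exact/esym/deg_lt_decomp.
  by move=> j _; rewrite hcompB hy ?subr0.
move=> a ha hb.
apply: (@fin_span_onto_inj _ _ N w _ (fun x => trunc G HG (trunc H HH x)) spw) => //.
- by move=> x y /=; rewrite !truncD.
- by move=> c x /=; rewrite !truncZ.
- move=> x _; apply: (subspace_sum (deg_lt_subspace HG n)) => i _.
  exact: deg_lt_mono (ltn_ord i) (graded_deg_lt HG (hcomp_graded HG i _)).
- move=> x hx.
  have [b1 [a2 [hb1 [ha2 ex]]]] :=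
    deg_lt_deg_ge_cover HH HG (base_field_sub bG bH) genH n x.
  have [a3 [b3 [ha3 [hb3 eb]]]] :=
    deg_lt_deg_ge_cover HG HH (base_field_sub bH bG) genG n b1.
  exists a3; split => //=; have -> : a3 = b1 - b3 by rewrite eb addrK.
  by rewrite trunc_id // -[b1](addrK a2) -ex trunc_id.
- have -> : trunc H HH a = 0 by apply: big1 => j _; apply: hb.
  by apply: big1 => j _; rewrite hcomp0.
Qed.

End Directness.

Section AssociatedGraded.
Variables (k : fieldType) (A : algType k) (G H : nat -> A -> Prop).
Hypotheses (HG : graded_decomposition G) (HH : graded_decomposition H).
Hypothesis cover :
  forall n a, exists a1 a2, deg_lt HG n a1 /\ deg_ge HH n a2 /\ a = a1 + a2.
Hypothesis direct : forall n a, deg_lt HG n a -> deg_ge HH n a -> a = 0.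

Lemma proj_ge_exists n x : exists b, deg_lt HG n (x - b) /\ deg_ge HH n b.
Proof. by have [a1 [a2 [h1 [h2 ->]]]] := cover n x; exists a2; rewrite addrK. Qed.

Definition proj_ge n x : A :=
  proj1_sig (constructive_indefinite_description _ (proj_ge_exists n x)).

Lemma proj_geP n x : deg_lt HG n (x - proj_ge n x) /\ deg_ge HH n (proj_ge n x).
Proof. exact: proj2_sig (constructive_indefinite_description _ (proj_ge_exists n x)). Qed.

Lemma proj_ge_unique n x b : deg_lt HG n (x - b) -> deg_ge HH n b -> proj_ge n x = b.
Proof.
move=> h1 h2; have [p1 p2] := proj_geP n x; apply/eqP; rewrite -subr_eq0; apply/eqP.
apply: (direct (n := n)); last exact: (subspaceB (deg_ge_subspace HH n)).
have -> : proj_ge n x - b = (x - b) - (x - proj_ge n x).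
  by rewrite opprB [RHS]addrC addrA subrK.
exact: (subspaceB (deg_lt_subspace HG n)).
Qed.

Lemma proj_ge_lin n c x y : proj_ge n (c *: x + y) = c *: proj_ge n x + proj_ge n y.
Proof.
have [p1 p2] := proj_geP n x; have [q1 q2] := proj_geP n y.
apply: proj_ge_unique; last exact: (subspace_lin (deg_ge_subspace HH n)).
have -> : c *: x + y - (c *: proj_ge n x + proj_ge n y)
          = c *: (x - proj_ge n x) + (y - proj_ge n y) by rewrite scalerBr opprD addrACA.
exact: (subspace_lin (deg_lt_subspace HG n)).
Qed.

Lemma proj_ge_graded_deg_lt n x : G n x -> deg_lt HG n.+1 (proj_ge n x).
Proof.
move=> hx; have [p1 _] := proj_geP n x; rewrite -[proj_ge n x](subKr x).
apply: (subspaceB (deg_lt_subspace HG n.+1)); first exact: graded_deg_lt.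
exact: deg_lt_mono p1.
Qed.

(* On [G n], the isomorphism onto [H n] induced by [A = deg_lt HG n (+) deg_ge HH n]. *)
Definition symbol n x := hcomp HH n (proj_ge n x).

Lemma symbol_lin n c x y : symbol n (c *: x + y) = c *: symbol n x + symbol n y.
Proof. by rewrite /symbol proj_ge_lin hcomp_lin. Qed.

Lemma symbol0 n : symbol n 0 = 0.
Proof.
rewrite /symbol; have -> : proj_ge n 0 = 0.
  by apply: proj_ge_unique; [rewrite subr0|]; apply: subspace0;
    [apply: deg_lt_subspace | apply: deg_ge_subspace].
exact: hcomp0.
Qed.

Lemma symbol_graded n x : H n (symbol n x).
Proof. exact: hcomp_graded. Qed.

Lemma symbol_mul n m x y :
  G n x -> G m y -> symbol (n + m) (x * y) = symbol n x * symbol m y.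
Proof.
move=> hx hy; have [p1 p2] := proj_geP n x; have [q1 q2] := proj_geP m y.
rewrite /symbol -hcomp_mul_deg_ge //; congr (hcomp _ _); apply: proj_ge_unique; last first.
  exact: deg_ge_mul.
have px := proj_ge_graded_deg_lt hx; have py := proj_ge_graded_deg_lt hy.
move: p1 q1; set u := x - _; set w := y - _ => p1 q1.
have ex : x = proj_ge n x + u by rewrite /u addrC subrK.
have ey : y = proj_ge m y + w by rewrite /w addrC subrK.
clearbody u w.
have -> : x * y = proj_ge n x * proj_ge m y
                  + (proj_ge n x * w + (u * proj_ge m y + u * w)).
  by rewrite [X in X * _]ex [X in _ * X]ey mulrDl !mulrDr -addrA.
rewrite addrC addKr; have sub_lt := deg_lt_subspace HG (n + m).
apply: (subspaceD sub_lt); last apply: (subspaceD sub_lt).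
- by have := deg_lt_mul px q1; rewrite addSn.
- by have := deg_lt_mul p1 py; rewrite addnS.
- exact: deg_lt_mono (leq_pred _) (deg_lt_mul p1 q1).
Qed.

Lemma symbol_inj n x : G n x -> symbol n x = 0 -> x = 0.
Proof.
move=> hx h0; have [p1 p2] := proj_geP n x.
have hp : proj_ge n x = 0.
  apply: (direct (proj_ge_graded_deg_lt hx)) => i.
  by rewrite ltnS leq_eqVlt => /orP [/eqP ->|]; [exact: h0 | exact: p2].
by move: p1; rewrite hp subr0 -{2}(hcomp_id HG hx) => ->.
Qed.

Lemma symbol_surj n b : H n b -> exists x, G n x /\ symbol n x = b.
Proof.
move=> hb; have [a1 [b1 [h1 [h2 e]]]] := cover n.+1 b.
exists (hcomp HG n a1); split; first exact: hcomp_graded.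
rewrite /symbol (@proj_ge_unique _ _ (b - b1)).
  by rewrite hcompB (hcomp_id HH hb) h2 ?subr0.
  by rewrite e addrK; apply: deg_lt_hcomp_sub.
apply: (subspaceB (deg_ge_subspace HH n)); first exact: graded_deg_ge.
exact: deg_ge_mono h2.
Qed.

Definition deg_bound x : nat :=
  proj1_sig (constructive_indefinite_description _ (deg_lt_exists HG x)).

Lemma deg_boundP x : deg_lt HG (deg_bound x) x.
Proof. exact: proj2_sig (constructive_indefinite_description _ (deg_lt_exists HG x)). Qed.

Definition sigma x := \sum_(i < deg_bound x) symbol i (hcomp HG i x).

Lemma sigmaE M x : deg_lt HG M x -> sigma x = \sum_(i < M) symbol i (hcomp HG i x).
Proof.
have vanish N : deg_lt HG N x -> forall i, (N <= i)%N -> symbol i (hcomp HG i x) = 0.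
  by move=> hN i hi; rewrite hN // symbol0.
move=> hM; rewrite /sigma.
rewrite -(big_ord_widen_zero (vanish _ (@deg_boundP x)) (leq_maxl _ M)).
by rewrite -(big_ord_widen_zero (vanish _ hM) (leq_maxr (deg_bound x) M)).
Qed.

Lemma sigma_homog n x : G n x -> sigma x = symbol n x.
Proof.
move=> hx; rewrite (sigmaE (graded_deg_lt HG hx)) big_ord_recr /= (hcomp_id HG hx).
by rewrite big1 ?add0r // => i _; rewrite (graded_deg_ge HG hx) ?symbol0.
Qed.

Lemma sigma_lin c x y : sigma (c *: x + y) = c *: sigma x + sigma y.
Proof.
set M := maxn (deg_bound x) (deg_bound y).
have hx : deg_lt HG M x := deg_lt_mono (leq_maxl _ _) (@deg_boundP x).
have hy : deg_lt HG M y := deg_lt_mono (leq_maxr _ _) (@deg_boundP y).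
rewrite (sigmaE (subspace_lin (deg_lt_subspace HG M) c hx hy)) (sigmaE hx) (sigmaE hy).
by rewrite scaler_sumr -big_split; apply: eq_bigr => i _; rewrite hcomp_lin symbol_lin.
Qed.

Lemma sigma0 : sigma 0 = 0.
Proof. by rewrite (sigmaE (subspace0 (deg_lt_subspace HG 0))) big_ord0. Qed.
Lemma sigmaD x y : sigma (x + y) = sigma x + sigma y.
Proof. by have := sigma_lin 1 x y; rewrite !scale1r. Qed.
Lemma sigmaZ c x : sigma (c *: x) = c *: sigma x.
Proof. by rewrite -[c *: x]addr0 sigma_lin sigma0 addr0. Qed.

Lemma sigma_decomp M x : deg_lt HG M x -> sigma x = \sum_(i < M) sigma (hcomp HG i x).
Proof.
move=> hM; rewrite (sigmaE hM); apply: eq_bigr => i _.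
by rewrite (sigma_homog (hcomp_graded HG i x)).
Qed.

Lemma sigma_mul x y : sigma (x * y) = sigma x * sigma y.
Proof.
set M := maxn (deg_bound x) (deg_bound y).
have hx : deg_lt HG M x := deg_lt_mono (leq_maxl _ _) (@deg_boundP x).
have hy : deg_lt HG M y := deg_lt_mono (leq_maxr _ _) (@deg_boundP y).
rewrite (sigma_decomp hx) (sigma_decomp hy) {1}(deg_lt_decomp hx) {1}(deg_lt_decomp hy).
rewrite mulr_suml (big_morph sigma sigmaD sigma0) mulr_suml.
apply: eq_bigr => i _; rewrite mulr_sumr (big_morph sigma sigmaD sigma0) mulr_sumr.
apply: eq_bigr => j _; have [gi gj] := (hcomp_graded HG i x, hcomp_graded HG j y).
by rewrite (sigma_homog (graded_mul HG gi gj)) (sigma_homog gi) (sigma_homog gj) symbol_mul.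
Qed.

Lemma sigma1 : sigma 1 = 1.
Proof.
rewrite (sigma_homog (graded1 HG)) /symbol (@proj_ge_unique 0 1 1) ?hcomp_id //.
- exact: graded1.
- by rewrite subrr; apply: subspace0 (deg_lt_subspace HG 0).
Qed.

Lemma hcomp_sigma n x : hcomp HH n (sigma x) = symbol n (hcomp HG n x).
Proof.
have hM := deg_lt_mono (leq_maxl (deg_bound x) n.+1) (@deg_boundP x).
rewrite (sigmaE hM) hcomp_sum (bigD1 (Ordinal (leq_maxr (deg_bound x) n.+1))) //=.
rewrite (hcomp_id HH (symbol_graded _ _)) big1 ?addr0 // => j ne.
rewrite (hcomp_homog HH n (symbol_graded _ _)) ifN //.
by apply: contra ne => /eqP e; apply/eqP; apply: val_inj; exact: esym e.
Qed.

Lemma sigma_inj x : sigma x = 0 -> x = 0.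
Proof.
move=> h0; rewrite (deg_lt_decomp (@deg_boundP x)); apply: big1 => i _.
by apply: (symbol_inj (hcomp_graded HG i x)); rewrite -hcomp_sigma h0 hcomp0.
Qed.

Lemma sigma_surj b : exists x, sigma x = b.
Proof.
have [M hM] := deg_lt_exists HH b; rewrite (deg_lt_decomp hM).
elim: M {hM} => [|M [x hx]]; first by exists 0; rewrite sigma0 big_ord0.
have [z [hz ez]] := symbol_surj (hcomp_graded HH M b).
by exists (x + z); rewrite sigmaD hx (sigma_homog hz) ez big_ord_recr.
Qed.

Lemma sigma_aut : is_alg_aut sigma.
Proof.
split; [exact: sigmaD | exact: sigmaZ | exact: sigma_mul | exact: sigma1 |].
have [g hg] : exists g, cancel g sigma.
  exists (fun b => proj1_sig (constructive_indefinite_description _ (sigma_surj b))).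
  by move=> b; exact: proj2_sig (constructive_indefinite_description _ (sigma_surj b)).
exists g => // x; apply/eqP; rewrite -subr_eq0; apply/eqP; apply: sigma_inj.
by rewrite sigmaD -scaleN1r sigmaZ scaleN1r hg subrr.
Qed.

End AssociatedGraded.

Theorem corollary3 (k : fieldType) (A : algType k)
    (Ag Bg : nat -> A -> Prop) :
  graded_decomposition Ag -> graded_decomposition Bg ->
  is_base_field (Ag 0%N) -> is_base_field (Bg 0%N) ->
  generates (Ag 1%N) -> generates (Bg 1%N) ->
  finite_dim (Ag 1%N) \/ finite_dim (Bg 1%N) ->
  (forall phi : A -> A, is_alg_aut phi -> is_graded_map Ag phi) ->
  forall (i : nat) (x : A), Ag i x <-> Bg i x.
Proof.
move=> HA HB bA bB genA genB fin all_graded.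
have finA : finite_dim (Ag 1%N).
  by case: fin => // /(finite_dim_deg1 HB HA bB bA genB).
have cover := deg_lt_deg_ge_cover HA HB (base_field_sub bB bA) genA.
have direct : forall n a, deg_lt HA n a -> deg_ge HB n a -> a = 0 :=
  deg_lt_deg_ge_trivial bA bB genA genB finA.
have sigma_graded := all_graded _ (sigma_aut cover direct).
move=> i x; split => hx.
  have [y [hy <-]] := (sigma_graded i).2 x hx.
  by rewrite (sigma_homog cover direct hy); apply: symbol_graded.
have [y [hy <-]] := symbol_surj cover direct hx.
by rewrite -(sigma_homog cover direct hy); apply: (sigma_graded i).1.
Qed.
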